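(* Let $\mathcal X\in\mathbb{IR}^n$ be a box and let $g:\mathcal X\to\mathbb{R}$ be continuous with a constant $L_g<\infty$ such that $\operatorname{wid}(g(\bm X))\le L_g\operatorname{diam}(\bm X)$ for every box $\bm X\subseteq\mathcal X$. Let $(g^{\rm u},g^{\rm o})_{\bm X\subseteq\mathcal X}$ be a scheme of superposition relaxations of $g$ with continuous summands having pointwise convergence of order $\alpha_g\ge1$. Then there exists $L'_g<\infty$ such that for every box $\bm X\subseteq\mathcal X$ and every $i=1,\dots,n$, $$\operatorname{wid}(g^{\rm u}_i(X_i))\le L'_g\operatorname{diam}(\bm X)\quad\text{and}\quad\operatorname{wid}(g^{\rm o}_i(X_i))\le L'_g\operatorname{diam}(\bm X).$$
   Context: $\mathbb{IR}^n$ is the set of boxes $\bm X=X_1\times\cdots\times X_n$ of compact intervals; $\operatorname{wid}(X_i)=\overline X_i-\underline X_i$, $\operatorname{diam}(\bm X)=\sqrt{\sum_i\operatorname{wid}(X_i)^2}$. For a function $u$ on a set $S$, $\operatorname{wid}(u(S))=\max_S u-\min_S u$. A superposition relaxation of $g$ on $\bm X$ is a pair of separable functions $g^{\rm u}(\bm x)=\sum_i g^{\rm u}_i(x_i)$, $g^{\rm o}(\bm x)=\sum_i g^{\rm o}_i(x_i)$ ($g^{\rm u}_i,g^{\rm o}_i:X_i\to\mathbb{R}$) with $g^{\rm u}\le g\le g^{\rm o}$ on $\bm X$. A scheme $(g^{\rm u},g^{\rm o})_{\bm X\subseteq\mathcal X}$ assigns to every box $\bm X\subseteq\mathcal X$ a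 superposition relaxation of $g$ on $\bm X$; it has pointwise convergence of order $\alpha>0$ if there is $\tau<\infty$ such that for every box $\bm X\subseteq\mathcal X$, $\sup_{\bm X}|g-g^{\rm u}|\le\tau\operatorname{diam}(\bm X)^\alpha$ and $\sup_{\bm X}|g-g^{\rm o}|\le\tau\operatorname{diam}(\bm X)^\alpha$. *)

From HB Require Import structures.
From mathcomp Require Import all_boot all_order all_algebra.
From mathcomp Require Import all_classical all_reals all_analysis.
Set Implicit Arguments. Unset Strict Implicit. Unset Printing Implicit Defensive.
Import Order.TTheory GRing.Theory Num.Theory.
Import numFieldNormedType.Exports.
Local Open Scope classical_set_scope.
Local Open Scope ring_scope.

Record box (R : realType) (n : nat) := Box {
  blo : 'I_n -> R;
  bhi : 'I_n -> R;
  ble : forall i, blo i <= bhi i }.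

(* Points of R^n are row vectors 'rV[R]_n; coordinate i of x is x ord0 i. *)
Definition box_set (R : realType) (n : nat) (B : box R n) : set 'rV[R]_n :=
  [set x | forall i : 'I_n, blo B i <= x ord0 i <= bhi B i].

Definition box_comp (R : realType) (n : nat) (B : box R n) (i : 'I_n) : set R :=
  `[blo B i, bhi B i].

Definition subbox (R : realType) (n : nat) (B B' : box R n) : Prop :=
  forall i : 'I_n, blo B' i <= blo B i /\ bhi B i <= bhi B' i.

Definition wid (R : realType) (n : nat) (B : box R n) (i : 'I_n) : R :=
  bhi B i - blo B i.

Definition diam (R : realType) (n : nat) (B : box R n) : R :=
  Num.sqrt (\sum_(i < n) (wid B i) ^+ 2).

Definition wid_img (R : realType) (T : Type) (u : T -> R) (S : set T) : R :=
  sup (u @` S) - inf (u @` S).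

Definition sepsum (R : realType) (n : nat) (f : 'I_n -> R -> R)
  (x : 'rV[R]_n) : R := \sum_(i < n) f i (x ord0 i).

Definition superposition_relaxation (R : realType) (n : nat)
  (g : 'rV[R]_n -> R) (B : box R n) (gu go : 'I_n -> R -> R) : Prop :=
  forall x, box_set B x -> sepsum gu x <= g x <= sepsum go x.

Definition relaxation_scheme (R : realType) (n : nat) (g : 'rV[R]_n -> R)
  (XX : box R n) (gu go : box R n -> 'I_n -> R -> R) : Prop :=
  forall B, subbox B XX -> superposition_relaxation g B (gu B) (go B).

Definition pointwise_convergence_order (R : realType) (n : nat)
  (g : 'rV[R]_n -> R) (XX : box R n) (gu go : box R n -> 'I_n -> R -> R)
  (alpha : R) : Prop :=
  exists tau : R, forall B, subbox B XX ->
    (forall x, box_set B x -> `|g x - sepsum (gu B) x| <= tau * (diam B) `^ alpha) /\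
    (forall x, box_set B x -> `|g x - sepsum (go B) x| <= tau * (diam B) `^ alpha).

(* Fix a coordinate i and two values s, t of X_i, and compare two points of
   the box that differ only in coordinate i.  Separability turns the
   difference of g^u_i at s and t into the difference of the sums g^u at the
   two points, which is within 2 tau diam(X)^alpha of the difference of g,
   itself at most L_g diam(X).  Since alpha >= 1 and diam(X) <= diam(XX),
   diam(X)^alpha <= diam(XX)^(alpha-1) diam(X), so the excess is linear in
   diam(X) as well. *)
From HB Require Import structures.
From mathcomp Require Import all_boot all_order all_algebra.
From mathcomp Require Import all_classical all_reals all_analysis.
From mathcomp Require Import lra.

Set Implicit Arguments.
Unset Strict Implicit.
Unset Printing Implicit Defensive.
Import Order.TTheory GRing.Theory Num.Theory.
Import numFieldNormedType.Exports.
Local Open Scope classical_set_scope.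
Local Open Scope ring_scope.

Section RealFunctions.
Variable R : realType.

Lemma wid_img_le (T : Type) (u : T -> R) (S : set T) c : S !=set0 ->
  (forall s t, S s -> S t -> u s - u t <= c) -> wid_img u S <= c.
Proof.
move=> [s0 Ss0] le_c.
have ne : u @` S !=set0 by exists (u s0), s0.
have sup_le t : S t -> sup (u @` S) <= u t + c.
  move=> St; apply: ge_sup => // _ [s Ss <-].
  by have := le_c s t Ss St; lra.
have : sup (u @` S) - c <= inf (u @` S).
  by apply: lb_le_inf => // _ [t St <-]; have := sup_le t St; lra.
rewrite /wid_img; lra.
Qed.

Lemma wid_img_ge (T : Type) (u : T -> R) (S : set T) (M : R) s t :
  (forall x, S x -> `|u x| <= M) -> S s -> S t -> u s - u t <= wid_img u S.
Proof.
move=> uM Ss St.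
have ub : has_ubound (u @` S) by exists M => _ [x Sx <-]; have /ler_normlP[] := uM x Sx.
have lb : has_lbound (u @` S).
  by exists (- M) => _ [x Sx <-]; have /ler_normlP[] := uM x Sx; lra.
have le_sup : u s <= sup (u @` S) by apply: ub_le_sup => //; exists s.
have inf_le : inf (u @` S) <= u t by apply: ge_inf => //; exists t.
rewrite /wid_img; lra.
Qed.

Lemma bounded_on_segment (f : R -> R) (a b : R) : a <= b ->
  {within `[a, b], continuous f} ->
  exists M, forall t, t \in `[a, b] -> `|f t| <= M.
Proof.
move=> ab fC.
have [cmin _ fmin] := EVT_min ab fC; have [cmax _ fmax] := EVT_max ab fC.
exists (`|f cmin| + `|f cmax|) => t abt.
have := fmin t abt; have := fmax t abt; have := ler_norm (f cmax).
have := ler_norm (- f cmin); have := normr_ge0 (f cmin); have := normr_ge0 (f cmax).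
rewrite normrN ler_norml; lra.
Qed.

Lemma powR_le_linear (d D alpha : R) :
  0 <= d -> d <= D -> 1 <= alpha -> d `^ alpha <= d * D `^ (alpha - 1).
Proof.
move=> d0 dD a1; have [->|dn0] := eqVneq d 0.
  by rewrite powR0 ?mul0r //; apply/negP => /eqP a0; lra.
have split_pow : d `^ (1 + (alpha - 1)) = d * d `^ (alpha - 1).
  by rewrite (@powRD _ d 1 (alpha - 1)) ?powRr1 // dn0 implybT.
rewrite addrC subrK in split_pow; rewrite split_pow.
by apply: ler_wpM2l => //; apply: ge0_ler_powR; rewrite ?nnegrE //; lra.
Qed.

End RealFunctions.

Section Boxes.
Variables (R : realType) (n : nat).
Implicit Types (B : box R n) (f : 'I_n -> R -> R).

Lemma diam_ge0 B : 0 <= diam B.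
Proof. exact: sqrtr_ge0. Qed.

Lemma diam_subbox B B' : subbox B B' -> diam B <= diam B'.
Proof.
move=> BB'; rewrite /diam ler_sqrt; last by apply: sumr_ge0 => j _; exact: sqr_ge0.
apply: ler_sum => j _; have [lo hi] := BB' j.
have w0 : 0 <= wid B j by rewrite /wid subr_ge0 ble.
have w'0 : 0 <= wid B' j by rewrite /wid subr_ge0 ble.
by rewrite ler_sqr ?nnegrE // /wid; lra.
Qed.

Lemma box_comp_neq0 B i : box_comp B i !=set0.
Proof. by exists (blo B i); rewrite /box_comp /= in_itv /= lexx ble. Qed.

Lemma sepsum_bounded_on_box B f :
  (forall j, {within box_comp B j, continuous f j}) ->
  exists M, forall x, box_set B x -> `|sepsum f x| <= M.
Proof.
move=> fC.
have [M fM] : {M : 'I_n -> R & forall j t, t \in `[blo B j, bhi B j] ->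
    `|f j t| <= M j}.
  apply: (@choice _ _ (fun j M => forall t, t \in `[blo B j, bhi B j] ->
    `|f j t| <= M)) => j.
  exact: bounded_on_segment (ble B j) (fC j).
exists (\sum_j M j) => x Bx; apply: le_trans (ler_norm_sum _ _ _) _.
by apply: ler_sum => j _; apply: fM; rewrite in_itv /=; exact: Bx.
Qed.

Definition edge_point B (i : 'I_n) (s : R) : 'rV[R]_n :=
  \row_j (if j == i then s else blo B j).

Lemma edge_point_in_box B i s : box_comp B i s -> box_set B (edge_point B i s).
Proof.
rewrite /box_comp /= in_itv /= => Bis j; rewrite /edge_point mxE.
by case: eqP => [->|_] //; rewrite lexx ble.
Qed.

Lemma sepsum_edge_pointB B f i s t :
  sepsum f (edge_point B i s) - sepsum f (edge_point B i t) = f i s - f i t.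
Proof.
rewrite /sepsum (bigD1 i) //= [X in _ - X](bigD1 i) //= !mxE eqxx.
rewrite (eq_bigr (fun j => f j (edge_point B i t ord0 j))); first lra.
by move=> j /negbTE ji; rewrite !mxE ji.
Qed.

Lemma wid_img_summand_le B (g : 'rV[R]_n -> R) f (T : R) i :
  (forall j, {within box_comp B j, continuous f j}) ->
  (forall x, box_set B x -> `|g x - sepsum f x| <= T) ->
  wid_img (f i) (box_comp B i) <= wid_img g (box_set B) + 2 * T.
Proof.
move=> fC gf.
have [M fM] := sepsum_bounded_on_box fC.
have gM x : box_set B x -> `|g x| <= T + M.
  move=> Bx; rewrite -[g x](subrK (sepsum f x)).
  by apply: le_trans (ler_normD _ _) _; apply: lerD; [exact: gf | exact: fM].
apply: wid_img_le (box_comp_neq0 B i) _ => s t Bis Bit.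
have [Bs Bt] := (edge_point_in_box Bis, edge_point_in_box Bit).
have := wid_img_ge gM Bs Bt.
have /ler_normlP[] := gf _ Bs; have /ler_normlP[] := gf _ Bt.
have := sepsum_edge_pointB B f i s t; lra.
Qed.

End Boxes.

Theorem lemma2 (R : realType) (n : nat) (XX : box R n) (g : 'rV[R]_n -> R)
  (gu go : box R n -> 'I_n -> R -> R) (alpha : R) :
  {within box_set XX, continuous g} ->
  (exists Lg : R, forall B, subbox B XX -> wid_img g (box_set B) <= Lg * diam B) ->
  relaxation_scheme g XX gu go ->
  (forall B, subbox B XX -> forall i : 'I_n,
     {within (box_comp B i), continuous (gu B i)} /\ {within (box_comp B i), continuous (go B i)}) ->
  1 <= alpha ->
  pointwise_convergence_order g XX gu go alpha ->
  exists L' : R, forall B, subbox B XX -> forall i : 'I_n,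
    wid_img (gu B i) (box_comp B i) <= L' * diam B /\
    wid_img (go B i) (box_comp B i) <= L' * diam B.
Proof.
move=> _ [Lg gL] _ relC a1 [tau conv].
pose K := `|tau| * diam XX `^ (alpha - 1).
exists (Lg + 2 * K) => B BXX i.
have d0 := diam_ge0 B.
have tau_lin : tau * diam B `^ alpha <= K * diam B.
  apply: le_trans (_ : `|tau| * diam B `^ alpha <= _).
    by apply: ler_wpM2r; [exact: powR_ge0 | exact: ler_norm].
  rewrite /K -mulrA [_ `^ _ * diam B]mulrC; apply: ler_wpM2l => //.
  exact/powR_le_linear/a1/diam_subbox.
have [guC goC] := (fun j => proj1 (relC B BXX j), fun j => proj2 (relC B BXX j)).
have [gu_conv go_conv] := conv B BXX.
have := wid_img_summand_le i guC gu_conv; have := wid_img_summand_le i goC go_conv.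
have := gL B BXX; lra.
Qed.
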